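(* Let $c$ be a positive integer and $c/(c+1)<\vartheta<1$, and let $(Z_t)$ be the random walk of the context with $r=1$. For $z\in(-1,1)$ let $w(z)$ denote the unique solution $w\in(-1,1)$ of $w^{c+1}(1-\vartheta)z+\vartheta z=w$, and set $$\bar\varphi(z):=\frac{(1-\vartheta)z\,w(z)+\vartheta z-w(z)}{1-w(z)},\qquad \Phi(w,z):=\frac{(1-\vartheta)z\left(\frac{w-w^{c+1}}{1-w}\right)-\vartheta z\,\bar\varphi(z)}{1-(\vartheta z)/w-w^cz(1-\vartheta)},\quad w\in(-1,1).$$ Define $\varphi(z,u):=\left.\frac{1}{u!}\frac{\partial^u}{\partial w^u}\Phi(w,z)\right|_{w=0}$. Then for every $u\in\mathbb{N}$, $$\mathbb{E}[\tau(u)\mid\tau(u)<\infty]=\frac{\varphi'(1,u)}{\varphi(1,u)},$$ where $\varphi'$ denotes the derivative with respect to $z$.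
   Context: Random walk: for $\vartheta\in(0,1)$ and positive integers $c,r$, let $Z_0=0$ and $Z_t=Z_{t-1}+\Delta_t$ with $\Delta_t$ i.i.d., $\Delta_t=+c$ with probability $1-\vartheta$ and $-r$ with probability $\vartheta$. Define $\tau(u):=\inf\{t\in\mathbb{N}_0: Z_t\ge u\}$. (In the single-agent trust model with Beta$(\alpha,\beta)$ prior, the agent's quitting time is $\tau(u_{\rm crit})$ with $u_{\rm crit}=r\alpha-c\beta+1$.) *)

From Stdlib Require Import Reals ZArith List Bool ClassicalEpsilon.
From Coquelicot Require Import Coquelicot.
Import ListNotations.
Open Scope R_scope.

(* All step sequences (Delta_1, ..., Delta_t) of length t; [true] = up-step +c
   (probability 1-th), [false] = down-step -r (probability th). *)
Fixpoint paths (t : nat) : list (list bool) :=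
  match t with
  | O => [nil]
  | S t' => flat_map (fun l => [true :: l; false :: l]) (paths t')
  end.

Definition step (c r : nat) (b : bool) : Z :=
  if b then Z.of_nat c else (- Z.of_nat r)%Z.

Definition walk (c r : nat) (l : list bool) (k : nat) : Z :=
  fold_right Z.add 0%Z (map (step c r) (firstn k l)).

Definition weight (th : R) (l : list bool) : R :=
  fold_right Rmult 1 (map (fun b : bool => if b then 1 - th else th) l).

(* tau(u) = length l, i.e. Z_{|l|} >= u and Z_k < u for all k < |l|. *)
Definition first_passage (c r : nat) (u : Z) (l : list bool) : bool :=
  (u <=? walk c r l (length l))%Z &&
  forallb (fun k => (walk c r l k <? u)%Z) (seq 0 (length l)).

Definition tau_prob (c r : nat) (th : R) (u : Z) (t : nat) : R :=
  fold_right Rplus 0 (map (weight th) (filter (first_passage c r u) (paths t))).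

Definition cond_exp_tau (c r : nat) (th : R) (u : Z) : R :=
  Series (fun t => INR t * tau_prob c r th u t) / Series (tau_prob c r th u).

Definition w_eq (c : nat) (th z w : R) : Prop :=
  w ^ (c + 1) * (1 - th) * z + th * z = w.

(* w(z): the unique solution in (-1,1) of w^(c+1)(1-th)z + th z = w
   (an arbitrary value when no unique such solution exists). *)
Definition wfun (c : nat) (th z : R) : R :=
  epsilon (inhabits 0) (fun w => -1 < w < 1 /\ w_eq c th z w /\
    forall w', -1 < w' < 1 -> w_eq c th z w' -> w' = w).

(* bar-phi(z) = phi(z,1) = E[z^tau(1); tau(1)<oo]:
   the paper's displayed formula lacks the factor (th z) in the denominator. *)
Definition phibar (c : nat) (th z : R) : R :=
  let w := wfun c th z in
  ((1 - th) * z * w + th * z - w) / (th * z * (1 - w)).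

Definition Phi (c : nat) (th w z : R) : R :=
  ((1 - th) * z * ((w - w ^ (c + 1)) / (1 - w)) - th * z * phibar c th z)
  / (1 - (th * z) / w - w ^ c * z * (1 - th)).

(* Phi(., z) with its removable singularity at w = 0 filled in. *)
Definition Phi_ext (c : nat) (th z : R) (w : R) : R :=
  if Req_EM_T w 0 then Lim (fun v => Phi c th v z) 0 else Phi c th w z.

Definition varphi (c : nat) (th z : R) (u : nat) : R :=
  Derive_n (Phi_ext c th z) u 0 / INR (fact u).

(* Write p_u(t) = P(tau(u) = t).  A first step gives p_u(t+1) = (1-th) p_(u-c)(t) + th p_(u+r)(t)
   for u > 0, and since the drift c(1-th) - r th is negative, the exponential tilt s^(Z_t) with
   E[s^Delta] < 1 for some s > 1 yields p_u(t) <= rho^t with rho < 1.  Hence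
   g_u(z) = sum_t p_u(t) z^t converges beyond z = 1, so g_u and g_u' extend continuously to
   z = 1, where E[tau(u) | tau(u) < oo] = g_u'(1) / g_u(1).
   For r = 1 and 0 < z < 1 the recursion makes F(w) = sum_(u >= 1) g_u(z) w^u satisfy
   F(w) K(w) (1 - w) = w ((1-th) z (w - w^(c+1)) - th z g_1(z) (1 - w)) with the kernel
   K(w) = w - th z - (1-th) z w^(c+1).  At the root w(z) of K this identifies g_1 = phibar,
   and dividing by K near w = 0 shows Phi(., z) = F, so varphi(z, u) = g_u(z). *)

From Stdlib Require Import Reals ZArith Lia Lra List Bool ClassicalEpsilon.
From Coquelicot Require Import Coquelicot.
Import ListNotations.
Open Scope R_scope.

Notation sumR := (fold_right Rplus 0).

Lemma sumR_map_filter {A : Type} (P : A -> bool) (f : A -> R) (l : list A) :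
  sumR (map f (filter P l)) = sumR (map (fun x => if P x then f x else 0) l).
Proof.
  induction l as [|x l IH]; simpl; [reflexivity|].
  destruct (P x); simpl; rewrite IH; ring.
Qed.

Lemma sumR_map_lincomb {A : Type} (al be : R) (f g : A -> R) (l : list A) :
  sumR (map (fun x => al * f x + be * g x) l) = al * sumR (map f l) + be * sumR (map g l).
Proof. induction l as [|x l IH]; simpl; [ring|]. rewrite IH; ring. Qed.

Lemma sumR_map_paths_S (f : list bool -> R) (t : nat) :
  sumR (map f (paths (S t))) = sumR (map (fun l => f (true :: l) + f (false :: l)) (paths t)).
Proof.
  simpl paths. induction (paths t) as [|l ls IH]; simpl; [reflexivity|].
  rewrite IH; ring.
Qed.

Lemma forallb_seq_S (f g : nat -> bool) m n :
  (forall k, f (S k) = g k) -> forallb f (seq (S m) n) = forallb g (seq m n).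
Proof.
  intros Hfg; revert m; induction n as [|n IH]; intros m; simpl; [reflexivity|].
  rewrite Hfg, IH; reflexivity.
Qed.

Lemma first_passage_nil c r u : first_passage c r u [] = (u <=? 0)%Z.
Proof. unfold first_passage; simpl. apply andb_true_r. Qed.

Lemma first_passage_cons c r u b l :
  first_passage c r u (b :: l) = ((0 <? u)%Z && first_passage c r (u - step c r b) l)%bool.
Proof.
  unfold first_passage; cbn [length seq forallb].
  change (walk c r (b :: l) 0) with 0%Z.
  change (walk c r (b :: l) (S (length l))) with (step c r b + walk c r l (length l))%Z.
  rewrite (forallb_seq_S _ (fun k => walk c r l k <? u - step c r b)%Z).
  2:{ intros k. change (walk c r (b :: l) (S k)) with (step c r b + walk c r l k)%Z.
      destruct (Z.ltb_spec (step c r b + walk c r l k) u),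
        (Z.ltb_spec (walk c r l k) (u - step c r b)); lia. }
  replace (u <=? step c r b + walk c r l (length l))%Z
    with (u - step c r b <=? walk c r l (length l))%Z
    by (destruct (Z.leb_spec u (step c r b + walk c r l (length l))),
          (Z.leb_spec (u - step c r b) (walk c r l (length l))); lia).
  destruct (0 <? u)%Z, (u - step c r b <=? walk c r l (length l))%Z; reflexivity.
Qed.

Lemma tau_prob_0 c r th u : tau_prob c r th u 0 = if (u <=? 0)%Z then 1 else 0.
Proof.
  unfold tau_prob; simpl. rewrite first_passage_nil.
  destruct (u <=? 0)%Z; simpl; unfold weight; simpl; ring.
Qed.

Lemma tau_prob_S c r th u t :
  tau_prob c r th u (S t) =
  if (0 <? u)%Z
  then (1 - th) * tau_prob c r th (u - Z.of_nat c) t + th * tau_prob c r th (u + Z.of_nat r) t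
  else 0.
Proof.
  unfold tau_prob. rewrite !sumR_map_filter, sumR_map_paths_S.
  set (I v l := if first_passage c r v l then weight th l else 0).
  destruct (0 <? u)%Z eqn:Hu.
  - rewrite <- sumR_map_lincomb. f_equal; apply map_ext; intros l.
    unfold I. rewrite !first_passage_cons, Hu.
    change (step c r true) with (Z.of_nat c).
    replace (u - step c r false)%Z with (u + Z.of_nat r)%Z by (simpl; lia).
    change (weight th (true :: l)) with ((1 - th) * weight th l).
    change (weight th (false :: l)) with (th * weight th l).
    destruct (first_passage c r (u - Z.of_nat c) l), (first_passage c r (u + Z.of_nat r) l);
      simpl; ring.
  - rewrite (map_ext _ (fun l => 0 * I u l + 0 * I u l)), sumR_map_lincomb; [ring|].
    intros l. unfold I. rewrite !first_passage_cons, Hu. simpl. ring.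
Qed.

Lemma tau_prob_nonneg c r th u t : 0 <= th <= 1 -> 0 <= tau_prob c r th u t.
Proof.
  intros Hth. revert u; induction t as [|t IH]; intros u.
  - rewrite tau_prob_0. destruct (u <=? 0)%Z; lra.
  - rewrite tau_prob_S. destruct (0 <? u)%Z; [|lra].
    pose proof (IH (u - Z.of_nat c)%Z). pose proof (IH (u + Z.of_nat r)%Z). nra.
Qed.

Lemma tau_prob_nonpos_level c r th u t : (u <= 0)%Z ->
  tau_prob c r th u t = match t with O => 1 | S _ => 0 end.
Proof.
  intros Hu. destruct t as [|t].
  - rewrite tau_prob_0. destruct (Z.leb_spec u 0); [reflexivity|lia].
  - rewrite tau_prob_S. destruct (Z.ltb_spec 0 u); [lia|reflexivity].
Qed.

Lemma is_derive_neg_right (f : R -> R) x l :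
  is_derive f x l -> l < 0 -> exists y, x < y /\ f y < f x.
Proof.
  intros Hf Hl. apply is_derive_Reals in Hf.
  destruct (Hf (- l / 2)) as [d Hd]; [lra|].
  pose proof (cond_pos d) as Hd0.
  exists (x + d / 2). split; [lra|].
  assert (Hq : (f (x + d / 2) - f x) / (d / 2) < l / 2).
  { specialize (Hd (d / 2) ltac:(lra) ltac:(rewrite Rabs_pos_eq; lra)).
    apply Rabs_def2 in Hd. lra. }
  apply Rmult_lt_compat_r with (r := d / 2) in Hq; [|lra].
  unfold Rdiv at 1 in Hq. rewrite Rmult_assoc, Rinv_l, Rmult_1_r in Hq; nra.
Qed.

Section GeometricTail.
Variables (c r : nat) (th : R).
Hypothesis Hth : 0 < th < 1.

(* E[s^Delta]; its derivative at s = 1 is the drift c (1 - th) - r th. *)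
Definition tilted_rate (s : R) : R := (1 - th) * s ^ c + th / s ^ r.

Lemma tilted_rate_nonneg s : 0 < s -> 0 <= tilted_rate s.
Proof.
  intros Hs. pose proof (pow_lt s c Hs). pose proof (pow_lt s r Hs).
  assert (0 <= th / s ^ r) by (apply Rle_mult_inv_pos; lra).
  unfold tilted_rate. nra.
Qed.

Lemma exists_tilt : INR c * (1 - th) < INR r * th -> exists s, 1 < s /\ tilted_rate s < 1.
Proof.
  intros Hdrift.
  destruct (is_derive_neg_right tilted_rate 1 ((1 - th) * INR c - th * INR r)) as [s [Hs Hf]].
  - unfold tilted_rate. auto_derive; [rewrite pow1; lra|]. rewrite !pow1. field.
  - lra.
  - exists s. split; [exact Hs|]. unfold tilted_rate in *. rewrite !pow1 in Hf. lra.
Qed.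

Lemma tau_prob_le_tilted s t u : 1 < s ->
  tau_prob c r th u t <= Rpower s (- IZR u) * tilted_rate s ^ t.
Proof.
  intros Hs. revert u; induction t as [|t IH]; intros u.
  - rewrite tau_prob_0, pow_O, Rmult_1_r. destruct (Z.leb_spec u 0) as [Hu|Hu].
    + rewrite <- (Rpower_O s) at 1 by lra. apply Rle_Rpower; [lra|].
      apply IZR_le in Hu. lra.
    + apply Rlt_le, exp_pos.
  - rewrite tau_prob_S. destruct (0 <? u)%Z.
    2:{ apply Rmult_le_pos; [apply Rlt_le, exp_pos|apply pow_le, tilted_rate_nonneg; lra]. }
    assert (Hdown : Rpower s (- IZR (u - Z.of_nat c)) = Rpower s (- IZR u) * s ^ c).
    { rewrite minus_IZR, <- INR_IZR_INZ, <- Rpower_pow by lra.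
      rewrite <- Rpower_plus. f_equal; ring. }
    assert (Hup : Rpower s (- IZR (u + Z.of_nat r)) = Rpower s (- IZR u) / s ^ r).
    { rewrite plus_IZR, <- INR_IZR_INZ, <- Rpower_pow by lra.
      unfold Rdiv. rewrite <- Rpower_Ropp, <- Rpower_plus. f_equal; ring. }
    pose proof (IH (u - Z.of_nat c)%Z) as IHdown. pose proof (IH (u + Z.of_nat r)%Z) as IHup.
    rewrite Hdown in IHdown. rewrite Hup in IHup.
    eapply Rle_trans.
    + apply Rplus_le_compat; apply Rmult_le_compat_l; [lra|exact IHdown|lra|exact IHup].
    + apply Req_le. unfold tilted_rate. simpl. field. apply pow_nonzero. lra.
Qed.

Lemma tau_prob_geometric_tail : INR c * (1 - th) < INR r * th ->
  exists rho, 0 <= rho < 1 /\ forall u t, tau_prob c r th u t <= rho ^ t.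
Proof.
  intros Hdrift. destruct (exists_tilt Hdrift) as [s [Hs Hrho]].
  assert (Hrho0 : 0 <= tilted_rate s) by (apply tilted_rate_nonneg; lra).
  exists (tilted_rate s). split; [lra|]. intros u t.
  destruct (Z_le_gt_dec u 0) as [Hu|Hu].
  - rewrite tau_prob_nonpos_level by exact Hu.
    destruct t; [simpl; lra|apply pow_le, Hrho0].
  - eapply Rle_trans; [apply tau_prob_le_tilted, Hs|].
    rewrite <- (Rmult_1_l (tilted_rate s ^ t)) at 2.
    apply Rmult_le_compat_r; [apply pow_le, Hrho0|].
    rewrite <- (Rpower_O s) by lra. apply Rle_Rpower; [lra|].
    assert (0 <= IZR u) by (apply IZR_le; lia). lra.
Qed.

End GeometricTail.

Lemma CV_radius_ge_bounded (a : nat -> R) (r M : R) :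
  0 <= r -> (forall n, Rabs (a n) * r ^ n <= M) -> Rbar_le r (CV_radius a).
Proof.
  intros Hr Ha. apply (proj1 (CV_radius_bounded a)). exists M. intros n.
  rewrite Rabs_mult, <- RPow_abs, (Rabs_pos_eq r Hr). apply Ha.
Qed.

Lemma CV_radius_ge_1_bounded (a : nat -> R) (M : R) :
  (forall n, Rabs (a n) <= M) -> Rbar_le 1 (CV_radius a).
Proof.
  intros Ha. apply (CV_radius_ge_bounded a 1 M); [lra|]. intros n.
  rewrite pow1, Rmult_1_r. apply Ha.
Qed.

Lemma CV_radius_gt_1_geom (a : nat -> R) (rho : R) :
  0 <= rho < 1 -> (forall n, Rabs (a n) <= rho ^ n) -> Rbar_lt 1 (CV_radius a).
Proof.
  intros Hrho Ha. set (r := 2 / (1 + rho)).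
  assert (Er : r * (1 + rho) = 2) by (unfold r; field; lra).
  assert (Hr1 : 1 < r) by nra.
  assert (Hrr : 0 <= rho * r <= 1) by nra.
  apply Rbar_lt_le_trans with r; [exact Hr1|].
  apply (CV_radius_ge_bounded a r 1); [lra|]. intros n.
  rewrite <- (pow1 n). eapply Rle_trans.
  - apply Rmult_le_compat_r; [apply pow_le; lra|apply Ha].
  - rewrite <- Rpow_mult_distr. apply pow_incr. exact Hrr.
Qed.

Lemma PSeries_abs_le_geom (a : nat -> R) (rho x : R) :
  0 <= rho < 1 -> (forall n, Rabs (a n) <= rho ^ n) -> Rabs x <= 1 ->
  Rabs (PSeries a x) <= / (1 - rho).
Proof.
  intros Hrho Ha Hx.
  assert (Hterm : forall n, 0 <= Rabs (a n * x ^ n) <= rho ^ n).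
  { intros n. split; [apply Rabs_pos|].
    rewrite Rabs_mult, <- RPow_abs, <- (Rmult_1_r (rho ^ n)).
    apply Rmult_le_compat; [apply Rabs_pos|apply pow_le, Rabs_pos|apply Ha|].
    rewrite <- (pow1 n). apply pow_incr. split; [apply Rabs_pos|exact Hx]. }
  assert (Hgeom : ex_series (fun n => rho ^ n)).
  { apply ex_series_geom. rewrite Rabs_pos_eq; lra. }
  unfold PSeries. eapply Rle_trans.
  - apply Series_Rabs.
    apply (@ex_series_le R_AbsRing R_CompleteNormedModule _ (fun n => rho ^ n)); [|exact Hgeom].
    intros n. change norm with Rabs. simpl. rewrite Rabs_Rabsolu. apply Hterm.
  - rewrite <- (Series_geom rho) by (rewrite Rabs_pos_eq; lra).
    apply Series_le; [exact Hterm|exact Hgeom].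
Qed.

Lemma filterlim_at_left_1_PSeries (a : nat -> R) (f : R -> R) :
  Rbar_lt 1 (CV_radius a) -> (forall z, 0 < z < 1 -> f z = PSeries a z) ->
  filterlim f (at_left 1) (locally (PSeries a 1)).
Proof.
  intros Ha Hf. apply (filterlim_ext_loc (PSeries a)).
  - exists (mkposreal 1 Rlt_0_1). intros z Hz Hz1. symmetry. apply Hf.
    change (Rabs (z - 1) < 1) in Hz. apply Rabs_def2 in Hz. lra.
  - apply (filterlim_filter_le_1 _ (@filter_le_within _ (locally 1) _ (fun y => y < 1))).
    apply continuity_pt_filterlim, PSeries_continuity. rewrite Rabs_R1. exact Ha.
Qed.

Lemma Series_const_0 : Series (fun _ : nat => 0) = 0.
Proof. rewrite <- PSeries_1. apply PSeries_const_0. Qed.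

Lemma Series_INR_mult (a : nat -> R) :
  Rbar_lt 1 (CV_radius a) -> Series (fun n => INR n * a n) = PSeries (PS_derive a) 1.
Proof.
  intros Ha. rewrite PSeries_1.
  assert (Hd : ex_series (PS_derive a)).
  { apply ex_pseries_1, ex_pseries_derive. rewrite Rabs_R1. exact Ha. }
  rewrite Series_incr_1.
  - rewrite Rmult_0_l, Rplus_0_l. apply Series_ext. intros n. reflexivity.
  - apply ex_series_incr_1. apply (ex_series_ext (PS_derive a)); [|exact Hd].
    intros n. reflexivity.
Qed.

Lemma filterlim_at_left_1_moments (a : nat -> R) (f : R -> R) :
  Rbar_lt 1 (CV_radius a) -> (forall z, 0 < z < 1 -> f z = PSeries a z) ->
  filterlim f (at_left 1) (locally (Series a)) /\
  filterlim (fun z => Derive f z) (at_left 1) (locally (Series (fun n => INR n * a n))).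
Proof.
  intros Ha Hf. rewrite <- PSeries_1, Series_INR_mult by exact Ha.
  split; [apply filterlim_at_left_1_PSeries; assumption|].
  apply filterlim_at_left_1_PSeries; [rewrite CV_radius_derive; exact Ha|].
  intros z Hz. rewrite <- Derive_PSeries.
  - apply Derive_ext_loc. apply (locally_interval _ z 0 1); [apply Hz|apply Hz|].
    intros y Hy0 Hy1. apply Hf. split; assumption.
  - eapply Rbar_lt_trans; [|exact Ha]. simpl. rewrite Rabs_pos_eq; lra.
Qed.

Fixpoint pow_slope (n : nat) (x y : R) : R :=
  match n with
  | O => 1
  | S m => x ^ n + y * pow_slope m x y
  end.

Lemma pow_slope_spec n x y : x ^ S n - y ^ S n = (x - y) * pow_slope n x y.
Proof.
  induction n as [|n IH]; simpl in *; [ring|].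
  replace (x * (x * x ^ n) - y * (y * y ^ n))
    with (x * (x * x ^ n) - y * (x * x ^ n) + y * (x * x ^ n - y * y ^ n)) by ring.
  rewrite IH. ring.
Qed.

Lemma pow_slope_nonneg n x y : 0 <= x -> 0 <= y -> 0 <= pow_slope n x y.
Proof.
  intros Hx Hy. induction n as [|n IH]; simpl; [lra|].
  pose proof (pow_le x n Hx). apply Rplus_le_le_0_compat; apply Rmult_le_pos; lra.
Qed.

Lemma pow_slope_le n x y : 0 <= y <= x -> x <= 1 -> pow_slope n x y <= pow_slope n 1 x.
Proof.
  intros Hyx Hx1. induction n as [|n IH]; simpl; [lra|].
  rewrite pow1.
  pose proof (pow_le x n ltac:(lra)). pose proof (pow_incr x 1 n ltac:(lra)) as Hxn.
  rewrite pow1 in Hxn.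
  pose proof (pow_slope_nonneg n x y ltac:(lra) ltac:(lra)).
  pose proof (pow_slope_nonneg n 1 x ltac:(lra) ltac:(lra)).
  nra.
Qed.

Definition kernel (c : nat) (a b w : R) : R := w - b - a * w ^ (c + 1).

Lemma kernel_neg c a b w :
  0 <= a <= 1 -> Rabs w <= 1 -> w + a * Rabs w < b -> kernel c a b w < 0.
Proof.
  intros Ha Hw Hb. unfold kernel.
  assert (Hpow : Rabs (w ^ (c + 1)) <= Rabs w).
  { rewrite <- RPow_abs, pow_add, pow_1.
    pose proof (pow_incr (Rabs w) 1 c ltac:(split; [apply Rabs_pos|exact Hw])) as H.
    rewrite pow1 in H. pose proof (Rabs_pos w). pose proof (pow_le (Rabs w) c (Rabs_pos w)).
    nra. }
  pose proof (Rle_abs (- w ^ (c + 1))) as Hneg. rewrite Rabs_Ropp in Hneg.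
  nra.
Qed.

Lemma kernel_root_exists c a b :
  0 <= a -> 0 < b -> a + b < 1 -> exists w, 0 < w < 1 /\ kernel c a b w = 0.
Proof.
  intros Ha Hb Hab.
  assert (Hcont : continuity (kernel c a b)) by (unfold kernel; reg).
  assert (H0 : kernel c a b 0 = - b) by (unfold kernel; rewrite pow_i by lia; ring).
  assert (H1 : kernel c a b 1 = 1 - b - a) by (unfold kernel; rewrite pow1; ring).
  destruct (IVT (kernel c a b) 0 1 Hcont ltac:(lra) ltac:(lra) ltac:(lra)) as [w [Hw Hroot]].
  exists w. split; [|exact Hroot].
  split; apply Rnot_le_lt; intros Hle.
  - replace w with 0 in Hroot by lra. lra.
  - replace w with 1 in Hroot by lra. lra.
Qed.

Lemma kernel_root_unique c a b w1 w2 :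
  0 <= a -> a + b < 1 -> 0 < w1 < 1 -> 0 < w2 < 1 ->
  kernel c a b w1 = 0 -> kernel c a b w2 = 0 -> w1 = w2.
Proof.
  intros Ha Hab.
  (* On [x, y] the chord of [w - a w^(c+1)] is flat, on [y, 1] it rises; the chord slopes
     of [w^(c+1)] increase, so this is impossible. *)
  assert (Hlt : forall x y, 0 < x < y -> y < 1 ->
                  kernel c a b x = 0 -> kernel c a b y = 0 -> False).
  { intros x y Hxy Hy Kx Ky. unfold kernel in Kx, Ky.
    replace (c + 1)%nat with (S c) in Kx, Ky by lia.
    assert (Hflat : a * pow_slope c y x = 1).
    { assert (E : (y - x) * (1 - a * pow_slope c y x) = 0).
      { replace ((y - x) * (1 - a * pow_slope c y x))
          with (y - x - a * ((y - x) * pow_slope c y x)) by ring.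
        rewrite <- pow_slope_spec. lra. }
      apply Rmult_integral in E. lra. }
    assert (Hrise : a * pow_slope c 1 y < 1).
    { assert (E : (1 - y) * (1 - a * pow_slope c 1 y) = 1 - b - a).
      { replace ((1 - y) * (1 - a * pow_slope c 1 y))
          with (1 - y - a * ((1 - y) * pow_slope c 1 y)) by ring.
        rewrite <- pow_slope_spec, pow1. lra. }
      apply Rnot_le_lt. intros Hge. nra. }
    pose proof (pow_slope_le c y x ltac:(lra) ltac:(lra)). nra. }
  intros Hw1 Hw2 K1 K2.
  destruct (Rtotal_order w1 w2) as [H|[H|H]].
  - exfalso. apply (Hlt w1 w2); tauto.
  - exact H.
  - exfalso. apply (Hlt w2 w1); tauto.
Qed.

Lemma w_eq_kernel c th z w : w_eq c th z w <-> kernel c (z * (1 - th)) (z * th) w = 0.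
Proof. unfold w_eq, kernel. split; intros; lra. Qed.

Lemma wfun_kernel_root c th z : 0 < th < 1 -> 0 < z < 1 ->
  0 < wfun c th z < 1 /\ kernel c (z * (1 - th)) (z * th) (wfun c th z) = 0.
Proof.
  intros Hth Hz.
  assert (Ha : 0 <= z * (1 - th) <= 1) by nra.
  assert (Hb : 0 < z * th) by nra.
  destruct (kernel_root_exists c (z * (1 - th)) (z * th) ltac:(lra) Hb ltac:(nra)) as [w [Hw Kw]].
  assert (Huniq : forall w', -1 < w' < 1 -> w_eq c th z w' -> w' = w).
  { intros w' Hw' E'. apply w_eq_kernel in E'.
    destruct (Rle_lt_dec w' 0) as [Hneg|Hpos].
    - exfalso. enough (kernel c (z * (1 - th)) (z * th) w' < 0) by lra.
      apply kernel_neg; [exact Ha|apply Rabs_le; lra|].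
      rewrite Rabs_left1 by exact Hneg. nra.
    - apply (kernel_root_unique c (z * (1 - th)) (z * th));
        [lra|nra|lra|exact Hw|exact E'|exact Kw]. }
  assert (Hex : exists w, -1 < w < 1 /\ w_eq c th z w /\
                  forall w', -1 < w' < 1 -> w_eq c th z w' -> w' = w).
  { exists w. split; [lra|]. split; [apply w_eq_kernel, Kw|exact Huniq]. }
  destruct (epsilon_spec (inhabits 0) _ Hex) as [Hrange [Heq _]].
  fold (wfun c th z) in Hrange, Heq.
  rewrite (Huniq _ Hrange Heq). split; [exact Hw|exact Kw].
Qed.

(* The coefficients of F(w) K(w) = - b0 w + a (w^2 + ... + w^(c+1)), where b0 = th z g_1(z). *)
Definition kernel_rem (c : nat) (a b0 : R) (n : nat) : R :=
  match n with
  | O => 0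
  | 1 => - b0
  | S m => if (m <=? c)%nat then a else 0
  end.

Lemma kernel_rem_sum c a b0 w m : (m <= c)%nat ->
  sum_f_R0 (fun k => kernel_rem c a b0 k * w ^ k) (S m) * (1 - w)
  = - b0 * w * (1 - w) + a * (w ^ 2 - w ^ (m + 2)).
Proof.
  intros Hm. induction m as [|m IH]; [simpl; ring|].
  rewrite tech5, Rmult_plus_distr_r, IH by lia.
  cbn [kernel_rem]. replace (S m <=? c)%nat with true by (symmetry; apply Nat.leb_le; lia).
  replace (S m + 2)%nat with (S (S (S m))) by lia. replace (m + 2)%nat with (S (S m)) by lia.
  simpl. ring.
Qed.

Lemma PSeries_kernel_rem c a b0 w : Rabs w < 1 ->
  PSeries (kernel_rem c a b0) w * (1 - w) = w * (a * (w - w ^ (c + 1)) - b0 * (1 - w)).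
Proof.
  intros Hw.
  assert (Hex : ex_pseries (kernel_rem c a b0) w).
  { apply CV_radius_inside. apply (Rbar_lt_le_trans _ 1); [exact Hw|].
    apply (CV_radius_ge_1_bounded _ (Rabs a + Rabs b0)). intros n.
    pose proof (Rabs_pos a). pose proof (Rabs_pos b0).
    unfold kernel_rem. destruct n as [|[|n]]; [|rewrite Rabs_Ropp|destruct (S n <=? c)%nat];
      rewrite ?Rabs_R0; lra. }
  rewrite (PSeries_decr_n _ (S c) _ Hex).
  rewrite (PSeries_ext (PS_decr_n _ _) (fun _ => 0)), PSeries_const_0.
  - rewrite Rmult_0_r, Rplus_0_r, kernel_rem_sum by lia.
    replace (c + 2)%nat with (S (c + 1)) by lia. simpl. ring.
  - intros n. unfold PS_decr_n. replace (S (S c) + n)%nat with (S (S (c + n))) by lia.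
    unfold kernel_rem. rewrite (proj2 (Nat.leb_gt _ _)) by lia. reflexivity.
Qed.

Section LevelGeneratingFunction.
Variables (c : nat) (th rho : R).
Hypotheses (Hth : 0 < th < 1) (Hrho : 0 <= rho < 1)
  (Htail : forall u t, tau_prob c 1 th u t <= rho ^ t).

Definition tau_gf (z : R) (u : Z) : R := PSeries (tau_prob c 1 th u) z.

Lemma tau_prob_abs_le u t : Rabs (tau_prob c 1 th u t) <= rho ^ t.
Proof. rewrite Rabs_pos_eq by (apply tau_prob_nonneg; lra). apply Htail. Qed.

Lemma CV_radius_tau_prob u : Rbar_lt 1 (CV_radius (tau_prob c 1 th u)).
Proof. apply (CV_radius_gt_1_geom _ rho Hrho), tau_prob_abs_le. Qed.

Lemma ex_pseries_tau_prob u z : Rabs z <= 1 -> ex_pseries (tau_prob c 1 th u) z.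
Proof.
  intros Hz. apply CV_radius_inside.
  eapply Rbar_le_lt_trans; [|apply CV_radius_tau_prob]. exact Hz.
Qed.

Lemma tau_gf_nonpos z u : (u <= 0)%Z -> Rabs z <= 1 -> tau_gf z u = 1.
Proof.
  intros Hu Hz. unfold tau_gf. rewrite PSeries_decr_1 by (apply ex_pseries_tau_prob, Hz).
  rewrite (PSeries_ext _ (fun _ => 0)), PSeries_const_0.
  - rewrite tau_prob_nonpos_level by exact Hu. ring.
  - intros n. unfold PS_decr_1. rewrite tau_prob_nonpos_level by exact Hu. reflexivity.
Qed.

Lemma tau_gf_rec z u : (0 < u)%Z -> Rabs z <= 1 ->
  tau_gf z u = z * (1 - th) * tau_gf z (u - Z.of_nat c) + z * th * tau_gf z (u + 1).
Proof.
  intros Hu Hz. unfold tau_gf. rewrite PSeries_decr_1 by (apply ex_pseries_tau_prob, Hz).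
  rewrite tau_prob_0. destruct (Z.leb_spec u 0) as [|_]; [lia|].
  rewrite (PSeries_ext _ (PS_plus (PS_scal (1 - th) (tau_prob c 1 th (u - Z.of_nat c)))
                                  (PS_scal th (tau_prob c 1 th (u + 1))))).
  - rewrite PSeries_plus, !PSeries_scal.
    + ring.
    + apply ex_pseries_scal; [apply Rmult_comm|apply ex_pseries_tau_prob, Hz].
    + apply ex_pseries_scal; [apply Rmult_comm|apply ex_pseries_tau_prob, Hz].
  - intros n. unfold PS_decr_1, PS_plus, PS_scal. rewrite tau_prob_S.
    destruct (Z.ltb_spec 0 u); [reflexivity|lia].
Qed.

Lemma tau_gf_bound z u : Rabs z <= 1 -> Rabs (tau_gf z u) <= / (1 - rho).
Proof. intros Hz. apply (PSeries_abs_le_geom _ rho z Hrho (tau_prob_abs_le u) Hz). Qed.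

Definition tau_gf_seq (z : R) (n : nat) : R :=
  match n with O => 0 | S _ => tau_gf z (Z.of_nat n) end.

Lemma CV_radius_tau_gf_seq z : Rabs z <= 1 -> Rbar_le 1 (CV_radius (tau_gf_seq z)).
Proof.
  intros Hz. apply (CV_radius_ge_1_bounded _ (/ (1 - rho))). intros [|n].
  - simpl. rewrite Rabs_R0. apply Rlt_le, Rinv_0_lt_compat. lra.
  - apply tau_gf_bound, Hz.
Qed.

Lemma ex_pseries_tau_gf_seq z w : Rabs z <= 1 -> Rabs w < 1 -> ex_pseries (tau_gf_seq z) w.
Proof.
  intros Hz Hw. apply CV_radius_inside.
  apply (Rbar_lt_le_trans _ 1); [exact Hw|apply CV_radius_tau_gf_seq, Hz].
Qed.

(* [tau_gf_seq] omits the levels [u <= 0], where [tau_gf] is [1]. *)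
Lemma tau_gf_seq_shift z n : Rabs z <= 1 ->
  PS_incr_n (tau_gf_seq z) (c + 1) (S n)
  = tau_gf z (Z.of_nat n - Z.of_nat c) - if (n <=? c)%nat then 1 else 0.
Proof.
  intros Hz. rewrite PS_incr_n_simplify. change zero with 0.
  match goal with |- ?x = ?y => change (@eq R x y) end.
  destruct (Nat.leb_spec n c) as [Hn|Hn].
  - rewrite tau_gf_nonpos by (lia || exact Hz).
    destruct Compare_dec.le_lt_dec as [Hle|]; [|ring].
    replace (S n - (c + 1))%nat with O by lia. simpl. ring.
  - destruct Compare_dec.le_lt_dec as [_|]; [|lia].
    replace (S n - (c + 1))%nat with (S (n - c - 1)) by lia.
    change (tau_gf_seq z (S (n - c - 1))) with (tau_gf z (Z.of_nat (S (n - c - 1)))).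
    replace (Z.of_nat (S (n - c - 1))) with (Z.of_nat n - Z.of_nat c)%Z by lia. ring.
Qed.

Lemma tau_gf_seq_kernel_coef z n : Rabs z <= 1 ->
  PS_incr_1 (tau_gf_seq z) n - z * th * tau_gf_seq z n
    - z * (1 - th) * PS_incr_n (tau_gf_seq z) (c + 1) n
  = kernel_rem c (z * (1 - th)) (z * th * tau_gf z 1) n.
Proof.
  intros Hz. destruct n as [|[|m]].
  - rewrite PS_incr_n_simplify. destruct Compare_dec.le_lt_dec; [lia|].
    simpl. change zero with 0. ring.
  - rewrite tau_gf_seq_shift, tau_gf_nonpos by (lia || exact Hz).
    simpl. ring.
  - rewrite tau_gf_seq_shift by exact Hz.
    change (PS_incr_1 (tau_gf_seq z) (S (S m))) with (tau_gf z (Z.of_nat (S m))).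
    change (tau_gf_seq z (S (S m))) with (tau_gf z (Z.of_nat (S (S m)))).
    rewrite (tau_gf_rec z (Z.of_nat (S m))) by (lia || exact Hz).
    replace (Z.of_nat (S m) + 1)%Z with (Z.of_nat (S (S m))) by lia.
    unfold kernel_rem. destruct (S m <=? c)%nat; ring.
Qed.

Lemma tau_gf_seq_kernel z w : Rabs z <= 1 -> Rabs w < 1 ->
  PSeries (tau_gf_seq z) w * kernel c (z * (1 - th)) (z * th) w * (1 - w)
  = w * (z * (1 - th) * (w - w ^ (c + 1)) - z * th * tau_gf z 1 * (1 - w)).
Proof.
  intros Hz Hw. set (h := tau_gf_seq z).
  assert (Hh : ex_pseries h w) by (apply ex_pseries_tau_gf_seq; assumption).
  rewrite <- PSeries_kernel_rem by exact Hw. f_equal.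
  transitivity (PSeries (PS_incr_1 h) w - z * th * PSeries h w
                - z * (1 - th) * PSeries (PS_incr_n h (c + 1)) w).
  { rewrite PSeries_incr_1, PSeries_incr_n. unfold kernel. ring. }
  rewrite <- !PSeries_scal, <- !PSeries_minus.
  - apply PSeries_ext. intros n. apply tau_gf_seq_kernel_coef, Hz.
  - apply ex_pseries_minus; [apply ex_pseries_incr_1, Hh|].
    apply ex_pseries_scal; [apply Rmult_comm|exact Hh].
  - apply ex_pseries_scal; [apply Rmult_comm|apply ex_pseries_incr_n, Hh].
  - apply ex_pseries_incr_1, Hh.
  - apply ex_pseries_scal; [apply Rmult_comm|exact Hh].
Qed.

(* Evaluate the kernel identity at its root [w(z)]. *)
Lemma tau_gf_1_phibar z : 0 < z < 1 -> tau_gf z 1 = phibar c th z.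
Proof.
  intros Hz. destruct (wfun_kernel_root c th z Hth Hz) as [Hw Kw].
  set (w := wfun c th z) in *.
  pose proof (tau_gf_seq_kernel z w ltac:(rewrite Rabs_pos_eq; lra)
                ltac:(rewrite Rabs_pos_eq; lra)) as E.
  rewrite Kw, Rmult_0_r, Rmult_0_l in E. symmetry in E.
  apply Rmult_integral in E. destruct E as [E|E]; [lra|].
  unfold kernel in Kw. unfold phibar. fold w.
  assert (0 < z * th) by nra.
  field_simplify_eq; [nra|repeat split; lra].
Qed.

Lemma Phi_tau_gf_seq z w : 0 < z < 1 -> w <> 0 -> Rabs w < z * th / 2 ->
  Phi c th w z = PSeries (tau_gf_seq z) w.
Proof.
  intros Hz Hw0 Hw.
  assert (Hw1 : Rabs w < 1) by nra.
  assert (HK : kernel c (z * (1 - th)) (z * th) w < 0).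
  { apply kernel_neg; [nra|lra|].
    pose proof (Rle_abs w). pose proof (Rabs_pos w).
    assert (z * (1 - th) * Rabs w <= Rabs w).
    { rewrite <- (Rmult_1_l (Rabs w)) at 2. apply Rmult_le_compat_r; nra. }
    lra. }
  pose proof (tau_gf_seq_kernel z w ltac:(rewrite Rabs_pos_eq; lra) Hw1) as E.
  rewrite tau_gf_1_phibar in E by exact Hz.
  assert (w < 1) by (pose proof (Rle_abs w); lra).
  unfold Phi. unfold kernel in HK, E.
  set (F := PSeries (tau_gf_seq z) w) in *. set (p := phibar c th z) in *.
  replace (w ^ (c + 1)) with (w ^ c * w) in * by (rewrite pow_add; ring).
  apply (Rmult_eq_reg_r ((w - z * th - z * (1 - th) * (w ^ c * w)) * (1 - w))).
  - rewrite <- (Rmult_assoc F), E. field. repeat split; lra.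
  - apply Rmult_integral_contrapositive. split; lra.
Qed.

Lemma varphi_tau_gf_seq z u : 0 < z < 1 -> varphi c th z u = tau_gf_seq z u.
Proof.
  intros Hz. set (h := tau_gf_seq z).
  assert (Hd : 0 < z * th / 2) by nra.
  assert (Hrad : Rbar_lt 0 (CV_radius h)).
  { apply (Rbar_lt_le_trans _ 1); [simpl; lra|].
    apply CV_radius_tau_gf_seq. rewrite Rabs_pos_eq; lra. }
  assert (Hnear : forall y, Rabs y < z * th / 2 -> y <> 0 -> Phi c th y z = PSeries h y).
  { intros y Hy Hy0. apply Phi_tau_gf_seq; assumption. }
  assert (Hlim : is_lim (fun v => Phi c th v z) 0 (PSeries h 0)).
  { apply (is_lim_ext_loc (PSeries h)).
    - exists (mkposreal _ Hd). intros y Hy Hy0. symmetry. apply Hnear; [|exact Hy0].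
      change (Rabs (y - 0) < z * th / 2) in Hy. rewrite Rminus_0_r in Hy. exact Hy.
    - apply is_lim_continuity, PSeries_continuity. rewrite Rabs_R0. exact Hrad. }
  assert (Hloc : locally 0 (fun y => Phi_ext c th z y = PSeries h y)).
  { exists (mkposreal _ Hd). intros y Hy.
    change (Rabs (y - 0) < z * th / 2) in Hy. rewrite Rminus_0_r in Hy.
    unfold Phi_ext. destruct (Req_EM_T y 0) as [->|Hy0].
    - rewrite (is_lim_unique _ _ _ Hlim). reflexivity.
    - apply Hnear; assumption. }
  unfold varphi. rewrite (Derive_n_ext_loc _ _ u 0 Hloc), Derive_n_coef by exact Hrad.
  field. apply not_0_INR, fact_neq_0.
Qed.

End LevelGeneratingFunction.

Lemma negative_drift (c : nat) th :
  INR c / (INR c + 1) < th -> 0 < th /\ INR c * (1 - th) < INR 1 * th.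
Proof.
  intros H. pose proof (pos_INR c) as Hc.
  assert (Hq : INR c < th * (INR c + 1)).
  { apply (Rmult_lt_compat_r (INR c + 1)) in H; [|lra].
    unfold Rdiv in H. rewrite Rmult_assoc, Rinv_l, Rmult_1_r in H by lra. exact H. }
  simpl. nra.
Qed.

Lemma cond_exp_tau_0 c r th : cond_exp_tau c r th 0 = 0.
Proof.
  unfold cond_exp_tau. rewrite (Series_ext _ (fun _ => 0)), Series_const_0.
  - unfold Rdiv. ring.
  - intros t. rewrite tau_prob_nonpos_level by lia. destruct t; simpl; ring.
Qed.

Theorem lemma3p6 (c : nat) (th : R) :
  (0 < c)%nat -> INR c / (INR c + 1) < th < 1 ->
  forall u : nat,
    exists L0 L1 : R,
      filterlim (fun z => varphi c th z u) (at_left 1) (locally L0) /\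
      filterlim (fun z => Derive (fun y => varphi c th y u) z) (at_left 1) (locally L1) /\
      cond_exp_tau c 1 th (Z.of_nat u) = L1 / L0.
Proof.
  intros _ [Hthreshold Hth1] u.
  destruct (negative_drift c th Hthreshold) as [Hth0 Hdrift].
  assert (Hth : 0 < th < 1) by lra.
  destruct (tau_prob_geometric_tail c 1 th Hth Hdrift) as [rho [Hrho Htail]].
  pose proof (varphi_tau_gf_seq c th rho Hth Hrho Htail) as Hvarphi.
  destruct u as [|n].
  - (* varphi(., 0) vanishes, and both sides are Rocq's 0 / 0 = 0 *)
    destruct (filterlim_at_left_1_moments (fun _ => 0) (fun z => varphi c th z 0)) as [H0 H1].
    + rewrite CV_radius_const_0. exact I.
    + intros z Hz. rewrite Hvarphi, PSeries_const_0 by exact Hz. reflexivity.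
    + do 2 eexists. split; [exact H0|split; [exact H1|]].
      rewrite cond_exp_tau_0, (Series_ext (fun n => INR n * 0) (fun _ => 0)) by (intros; ring).
      rewrite Series_const_0. unfold Rdiv. ring.
  - destruct (filterlim_at_left_1_moments (tau_prob c 1 th (Z.of_nat (S n)))
                (fun z => varphi c th z (S n))) as [H0 H1].
    + apply (CV_radius_tau_prob c th rho Hth Hrho Htail).
    + intros z Hz. rewrite Hvarphi by exact Hz. reflexivity.
    + do 2 eexists. split; [exact H0|split; [exact H1|reflexivity]].
Qed.
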